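(* Let $\Gamma$ be a finite simplicial graph with no SIL, and let $k\ge0$ be the number of non-abelian free equivalence classes of $\Gamma$. Then $\mathbb{A}_\Gamma\cong(\mathbb{F}_2)^k\times\mathbb{A}_\Lambda$ for some graph $\Lambda$ with no non-abelian free equivalence class.
   Context: $\mathbb{A}_\Gamma$ is the right-angled Artin group on $\Gamma$. $\mathrm{lk}(u)$ = neighbours of $u$, $\mathrm{st}(u)=\mathrm{lk}(u)\cup\{u\}$; $u\le v$ iff $\mathrm{lk}(u)\subseteq\mathrm{st}(v)$; $u\sim v$ iff $u\le v\le u$; a non-abelian free equivalence class is a class of size $\ge 2$ whose vertices are pairwise non-adjacent. A SIL is a triple $(x,y\mid z)$ of pairwise non-adjacent vertices such that the component of $\Gamma\setminus(\mathrm{lk}(x)\cap\mathrm{lk}(y))$ containing $z$ contains neither $x$ nor $y$. *)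

From mathcomp Require Import all_boot.
Set Implicit Arguments. Unset Strict Implicit. Unset Printing Implicit Defensive.

(* A finite simplicial graph: vertex type V : finType, adjacency e : rel V,
   assumed symmetric and irreflexive (hypotheses of the theorem). *)

Section Graph.
Variables (V : finType) (e : rel V).

Definition lk (u : V) : {set V} := [set w | e u w].
Definition st (u : V) : {set V} := u |: lk u.
Definition vle (u v : V) : bool := lk u \subset st v.
Definition vequiv (u v : V) : bool := vle u v && vle v u.
Definition eqclass (u : V) : {set V} := [set w | vequiv u w].
Definition is_eqclass (C : {set V}) : bool := [exists u, C == eqclass u].

Definition nafree_class (C : {set V}) : bool :=
  [&& is_eqclass C, 1 < #|C| & [forall u in C, forall w in C, ~~ e u w]].

Definition num_nafree : nat := #|[set C : {set V} | nafree_class C]|.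

(* SIL (x,y | z): x,y,z pairwise non-adjacent (x <> y), and the component of
   Gamma \ (lk x :&: lk y) containing z contains neither x nor y. *)
Definition sil (x y z : V) : bool :=
  let L := lk x :&: lk y in
  let r := [rel a b | [&& e a b, a \notin L & b \notin L]] in
  [&& x != y, ~~ e x y, ~~ e x z, ~~ e y z,
      ~~ connect r z x & ~~ connect r z y].

Definition has_SIL : Prop := exists x y z, sil x y z.

End Graph.

(* Groups given as setoids (carrier, equality, operations). *)
Record sgrp := SGrp {
  carr : Type;
  geq : carr -> carr -> Prop;
  gmul : carr -> carr -> carr;
  gone : carr;
  ginv : carr -> carr }.

(* Right-angled Artin group: words over generators^{+-1} modulo the
   congruence generated by free cancellation and commutation of adjacent
   generators. *)
Definition letter (V : Type) := (V * bool)%type.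

Inductive raag_eq (V : Type) (e : V -> V -> bool) : seq (letter V) -> seq (letter V) -> Prop :=
| raag_refl w : raag_eq e w w
| raag_sym u w : raag_eq e u w -> raag_eq e w u
| raag_trans u v w : raag_eq e u v -> raag_eq e v w -> raag_eq e u w
| raag_cancel u w a b :
    raag_eq e (u ++ (a, b) :: (a, ~~ b) :: w) (u ++ w)
| raag_comm u w a b c d : e a c ->
    raag_eq e (u ++ (a, b) :: (c, d) :: w) (u ++ (c, d) :: (a, b) :: w).

Definition RAAG (V : Type) (e : V -> V -> bool) : sgrp :=
  @SGrp (seq (letter V)) (raag_eq e) (@cat _) [::]
        (fun w => rev (map (fun l => (l.1, ~~ l.2)) w)).

Definition F2 : sgrp := @RAAG bool (fun _ _ => false).

Definition trivial_grp : sgrp :=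
  @SGrp unit (fun _ _ => True) (fun _ _ => tt) tt (fun _ => tt).

Definition prod_grp (G H : sgrp) : sgrp :=
  @SGrp (carr G * carr H)%type
    (fun x y => geq x.1 y.1 /\ geq x.2 y.2)
    (fun x y => (gmul x.1 y.1, gmul x.2 y.2))
    (gone G, gone H)
    (fun x => (ginv x.1, ginv x.2)).

Fixpoint pow_grp (G : sgrp) (n : nat) : sgrp :=
  match n with
  | 0 => trivial_grp
  | n'.+1 => prod_grp G (pow_grp G n')
  end.

Definition grp_iso (G H : sgrp) : Prop :=
  exists (f : carr G -> carr H) (g : carr H -> carr G),
    [/\ (forall x y, geq x y -> geq (f x) (f y)),
        (forall x y, geq x y -> geq (g x) (g y)),
        (forall x y, geq (f (gmul x y)) (gmul (f x) (f y))),
        (forall x, geq (g (f x)) x) &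
        (forall y, geq (f (g y)) y)].

Definition simplicial (V : finType) (e : rel V) : Prop :=
  symmetric e /\ irreflexive e.

(* Let a != b be non-adjacent and equivalent. Then lk a = lk b, and without a SIL
   every other vertex c is adjacent to both: otherwise (a, b | c) would be a SIL,
   since a and b become isolated once lk a :&: lk b is removed. So every
   non-abelian free class is a pair {a, b} joined to all other vertices, distinct
   such pairs are disjoint, and the graph is the join of k edgeless pairs with the
   graph Lambda induced on the remaining vertices. Letters from different factors
   of a join commute, so a word is equivalent to the concatenation of its
   projections onto the pairs (words in F_2) and onto Lambda, and these projections
   respect the defining relations. Finally Lambda has no non-abelian free class:
   its vertices are adjacent to all removed ones, so u <= v in Lambda implies
   u <= v in the whole graph, and such a class would be one more pair there. *)

From Pilot Require Import Defs.
From mathcomp Require Import all_boot.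
Set Implicit Arguments. Unset Strict Implicit. Unset Printing Implicit Defensive.

Definition wmap (A B : Type) (g : A -> B) (w : seq (letter A)) : seq (letter B) :=
  [seq (g l.1, l.2) | l <- w].

Definition wpmap (A B : Type) (h : A -> option B) (w : seq (letter A)) : seq (letter B) :=
  pmap (fun l => omap (fun x => (x, l.2)) (h l.1)) w.

Definition wfilter (A : Type) (p : pred A) (w : seq (letter A)) : seq (letter A) :=
  [seq l <- w | p l.1].

Lemma wpmap_cat (A B : Type) (h : A -> option B) u w :
  wpmap h (u ++ w) = wpmap h u ++ wpmap h w.
Proof. exact: pmap_cat. Qed.

Lemma wpmap_Some (A B : Type) (g : A -> B) w : wpmap (fun x => Some (g x)) w = wmap g w.
Proof. by elim: w => //= l w IH; rewrite -IH. Qed.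

Lemma wpmap_wmap (A B : Type) (h : B -> option A) (g : A -> B) w :
  (forall x, h (g x) = Some x) -> wpmap h (wmap g w) = w.
Proof.
by move=> hgK; elim: w => [|[x b] w IH] //=; rewrite /wpmap /= hgK /= -/(wpmap h _) IH.
Qed.

Lemma wpmap_eq_nil (A B : Type) (h : A -> option B) w :
  all (fun l : letter A => ~~ h l.1) w -> wpmap h w = [::].
Proof.
elim: w => [|[x b] w IH] //= /andP[hx /IH]; rewrite /wpmap /=.
by case: (h x) hx.
Qed.

Lemma wmap_wpmap (A B : Type) (h : A -> option B) (g : B -> A) w :
  (forall v x, h v = Some x -> g x = v) ->
  wmap g (wpmap h w) = wfilter (fun v => h v) w.
Proof.
move=> hK; elim: w => [|[x b] w IH] //=; rewrite /wpmap /=.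
by case hx: (h x) => [y|] //=; rewrite (hK _ _ hx) -IH.
Qed.

Lemma wpmap_wfilter (A B : Type) (h : A -> option B) (p : pred A) w :
  (forall v, h v -> p v) -> wpmap h (wfilter p w) = wpmap h w.
Proof.
move=> hp; elim: w => [|[x b] w IH] //=.
rewrite /wfilter /=; case px: (p x); rewrite /wpmap /= -!/(wpmap h _) -IH //.
by case hx: (h x) => //; move: (hp x); rewrite hx px => /(_ isT).
Qed.

Section RaagEq.
Variables (V : Type) (e : V -> V -> bool).
Local Notation "u ~ w" := (raag_eq e u w) (at level 70).

Lemma raag_eq_ctx u w s t : u ~ w -> s ++ u ++ t ~ s ++ w ++ t.
Proof.
elim=> {u w} [w|u w _ IH|u v w _ IH1 _ IH2|u w a b|u w a b c d eac].
- exact: raag_refl.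
- exact: raag_sym.
- exact: raag_trans IH1 IH2.
- have := raag_cancel e (s ++ u) (w ++ t) a b.
  by rewrite -!catA.
- have := raag_comm (s ++ u) (w ++ t) b d eac.
  by rewrite -!catA.
Qed.

Lemma raag_eq_cat u u' w w' : u ~ u' -> w ~ w' -> u ++ w ~ u' ++ w'.
Proof.
move=> uu' ww'; apply: (@raag_trans _ _ _ (u' ++ w)).
  by have := raag_eq_ctx [::] w uu'.
by have := raag_eq_ctx u' [::] ww'; rewrite !cats0.
Qed.

Lemma raag_eq_cons l u w : u ~ w -> l :: u ~ l :: w.
Proof. exact: (@raag_eq_cat [:: l]) (raag_refl _ _). Qed.

Lemma raag_eq_commute (x : letter V) u v :
  all (fun m : letter V => e x.1 m.1) u -> x :: u ++ v ~ u ++ x :: v.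
Proof.
elim: u => [|m u IH] /= ; first by move=> _; exact: raag_refl.
case/andP=> exm /IH xuv; apply: raag_trans (raag_eq_cons m xuv).
by case: x exm {xuv IH} => a b; case: m => c d; exact: (raag_comm [::]).
Qed.

Lemma raag_eq_shuffle (p : pred V) w :
  (forall v v', ~~ p v -> p v' -> e v v') ->
  w ~ wfilter p w ++ wfilter (predC p) w.
Proof.
move=> join; elim: w => [|[v b] w IH] /=; first exact: raag_refl.
case pv: (p v) => /=; first exact: raag_eq_cons.
apply: raag_trans (raag_eq_cons _ IH) _; apply: raag_eq_commute.
rewrite all_filter; elim: w {IH} => //= -[v' c] w ->; rewrite andbT.
by apply/implyP; apply: join; rewrite pv.
Qed.

End RaagEq.

Lemma wpmap_raag_eq (A B : Type) (e : A -> A -> bool) (e' : B -> B -> bool)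
    (h : A -> option B) u w :
  (forall x y x' y', h x = Some x' -> h y = Some y' -> e x y -> e' x' y') ->
  raag_eq e u w -> raag_eq e' (wpmap h u) (wpmap h w).
Proof.
move=> he; elim=> {u w} [w|u w _ IH|u v w _ IH1 _ IH2|u w a b|u w a b c d eac].
- exact: raag_refl.
- exact: raag_sym.
- exact: raag_trans IH1 IH2.
- rewrite !wpmap_cat /wpmap /=; case: (h a) => [x|] /=; last exact: raag_refl.
  exact: raag_cancel.
- rewrite !wpmap_cat /wpmap /=.
  case ha: (h a) => [x|]; case hc: (h c) => [y|] /=; try exact: raag_refl.
  exact: raag_comm (he _ _ _ _ ha hc eac).
Qed.

Lemma wmap_raag_eq (A B : Type) (e : A -> A -> bool) (e' : B -> B -> bool)
    (g : A -> B) u w :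
  (forall x y, e x y -> e' (g x) (g y)) ->
  raag_eq e u w -> raag_eq e' (wmap g u) (wmap g w).
Proof.
move=> ge; rewrite -!wpmap_Some; apply: wpmap_raag_eq => x y _ _ [<-] [<-].
exact: ge.
Qed.

Lemma pow_F2_geq_refl n (y : carr (pow_grp F2 n)) : Defs.geq y y.
Proof. by elim: n y => [//|n IH] [y1 y2]; split; [exact: raag_refl | exact: IH]. Qed.

Definition restrict (V : finType) (e : rel V) (P : pred V) : rel {v | P v} :=
  fun a b => e (val a) (val b).
Arguments restrict {V} e P.

Definition pair_set {V : finType} (p : V * V) : {set V} := [set p.1; p.2].

Section JoinPairs.
Variables (V : finType) (e : rel V).
Hypotheses (e_sym : symmetric e) (e_irr : irreflexive e).

Definition join_pair (p : V * V) : bool :=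
  [&& p.1 != p.2, ~~ e p.1 p.2 &
      [forall c, (c \notin pair_set p) ==> e p.1 c && e p.2 c]].

Definition outside_pairs (l : seq (V * V)) (v : V) : bool :=
  all (fun p => v \notin pair_set p) l.

Definition disjoint_pairs (l : seq (V * V)) : bool :=
  pairwise (fun p q => [disjoint pair_set p & pair_set q]) l.

Definition pair_index (p : V * V) (v : V) : option bool :=
  if v == p.1 then Some false else if v == p.2 then Some true else None.

Definition pair_vertex (p : V * V) (t : bool) : V := if t then p.2 else p.1.

Lemma pair_indexE p v : isSome (pair_index p v) = (v \in pair_set p).
Proof. by rewrite /pair_index !inE; case: (v == p.1); case: (v == p.2). Qed.

Lemma pair_vertexK p : p.1 != p.2 -> pcancel (pair_vertex p) (pair_index p).
Proof.
move=> p12 [|]; rewrite /pair_index /pair_vertex ?eqxx //.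
by rewrite eq_sym (negbTE p12).
Qed.

Lemma pair_indexK p v t : pair_index p v = Some t -> pair_vertex p t = v.
Proof.
rewrite /pair_index /pair_vertex; case: eqP => [-> [<-]|_] //.
by case: eqP => [-> [<-]|].
Qed.

Lemma pair_vertex_in p t : pair_vertex p t \in pair_set p.
Proof. by case: t; rewrite !inE eqxx ?orbT. Qed.

Lemma join_pair_adj p v c :
  join_pair p -> v \in pair_set p -> c \notin pair_set p -> e v c.
Proof.
case/and3P=> _ _ /forallP/(_ c)/implyP adj vp /adj /andP[e1 e2].
by move: vp; rewrite !inE => /orP[]/eqP->.
Qed.

Lemma join_pair_nonadj p u v :
  join_pair p -> u \in pair_set p -> v \in pair_set p -> e u v = false.
Proof.
case/and3P=> _ nadj _; rewrite !inE => /orP[]/eqP-> /orP[]/eqP->; rewrite ?e_irr //.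
  exact: negbTE.
by rewrite e_sym (negbTE nadj).
Qed.

Lemma outside_pairs_disjoint p l v :
  all (fun q => [disjoint pair_set p & pair_set q]) l -> v \in pair_set p ->
  outside_pairs l v.
Proof. by move=> pl vp; apply/allP=> q /(allP pl) /disjointFr->. Qed.

Fixpoint pairs_proj (l : seq (V * V)) :
    seq (letter V) -> carr (pow_grp F2 (size l)) :=
  match l return seq (letter V) -> carr (pow_grp F2 (size l)) with
  | [::] => fun _ => tt
  | p :: l' => fun w => (wpmap (pair_index p) w, pairs_proj l' w)
  end.

Fixpoint pairs_word (l : seq (V * V)) :
    carr (pow_grp F2 (size l)) -> seq (letter V) :=
  match l return carr (pow_grp F2 (size l)) -> seq (letter V) with
  | [::] => fun _ => [::]
  | p :: l' => fun y => wmap (pair_vertex p) y.1 ++ @pairs_word l' y.2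
  end.
Arguments pairs_word : clear implicits.

Lemma pairs_proj_cat l u w :
  pairs_proj l (u ++ w) = gmul (pairs_proj l u) (pairs_proj l w).
Proof. by elim: l => //= p l ->; rewrite wpmap_cat. Qed.

Lemma pairs_proj_raag_eq l u w :
  all join_pair l -> raag_eq e u w -> Defs.geq (pairs_proj l u) (pairs_proj l w).
Proof.
elim: l => //= p l IH /andP[pj lj] uw; split; last exact: IH.
apply: (wpmap_raag_eq (e' := fun _ _ => false)) uw => x y x' y' hx hy.
by rewrite (join_pair_nonadj pj) // -pair_indexE ?hx ?hy.
Qed.

Lemma pairs_word_geq l y y' :
  Defs.geq y y' -> raag_eq e (pairs_word l y) (pairs_word l y').
Proof.
elim: l y y' => [|p l IH] /= y y'; first by move=> _; exact: raag_refl.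
by case=> y1 y2; apply: raag_eq_cat (IH _ _ y2); apply: wmap_raag_eq y1.
Qed.

Lemma pairs_word_inside l y :
  all (fun m : letter V => ~~ outside_pairs l m.1) (pairs_word l y).
Proof.
elim: l y => //= p l IH y; rewrite all_cat all_map; apply/andP; split.
  by apply/allP=> m _ /=; rewrite pair_vertex_in.
by apply: sub_all (IH y.2) => m /=; rewrite negb_and => ->; rewrite orbT.
Qed.

Lemma pairs_proj_word l y s t :
  all join_pair l -> disjoint_pairs l ->
  all (fun m : letter V => outside_pairs l m.1) s ->
  all (fun m : letter V => outside_pairs l m.1) t ->
  pairs_proj l (s ++ pairs_word l y ++ t) = y.
Proof.
elim: l y s t => [[]|p l IH] //= [y1 y2] s t.
move=> /andP[/and3P[p12 _ _] lj] /andP[pl ld] so to.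
have off_p w :
    all (fun m : letter V => (m.1 \notin pair_set p) && outside_pairs l m.1) w ->
  wpmap (pair_index p) w = [::].
  by move=> wo; apply: wpmap_eq_nil; apply: sub_all wo => m /andP[]; rewrite pair_indexE.
congr (_, _).
  rewrite !wpmap_cat (off_p s) // (off_p t) // (wpmap_wmap _ (pair_vertexK p12)).
  rewrite (wpmap_eq_nil (w := pairs_word l y2)) ?cats0 //.
  apply: sub_all (pairs_word_inside y2) => m; rewrite pair_indexE; apply: contra.
  exact: outside_pairs_disjoint pl.
rewrite /= -catA catA IH //; last by apply: sub_all to => m /andP[].
rewrite all_cat all_map (sub_all _ so) => [|m /andP[] //].
by apply/allP=> m _ /=; exact: outside_pairs_disjoint pl (pair_vertex_in _ _).
Qed.

Lemma pairs_proj_wfilter l (P : pred V) w :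
  (forall q v, q \in l -> v \in pair_set q -> P v) ->
  pairs_proj l (wfilter P w) = pairs_proj l w.
Proof.
elim: l => //= q l IH lP; rewrite IH => [|q' v q'l]; last first.
  by apply: lP; rewrite inE q'l orbT.
by rewrite wpmap_wfilter // => v; rewrite pair_indexE; apply: lP (mem_head _ _).
Qed.

Lemma raag_eq_pairs_decomp l x :
  all join_pair l -> disjoint_pairs l ->
  raag_eq e x (pairs_word l (pairs_proj l x) ++ wfilter (outside_pairs l) x).
Proof.
elim: l x => [|p l IH] x /=.
  by rewrite /wfilter filter_predT => _ _; exact: raag_refl.
case/andP=> pj lj /andP[pl ld].
pose in_p v := isSome (pair_index p v).
apply: raag_trans (raag_eq_shuffle (p := in_p) x _) _.
  by move=> v v'; rewrite /in_p !pair_indexE => vp v'p; rewrite e_sym (join_pair_adj pj).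
rewrite -catA wmap_wpmap; last exact: pair_indexK.
apply: raag_eq_cat; first exact: raag_refl.
apply: raag_trans (IH _ lj ld) _.
rewrite pairs_proj_wfilter => [|q v ql vq]; last first.
  by rewrite /= /in_p pair_indexE (disjointFl (allP pl q ql) vq).
rewrite /wfilter -filter_predI; apply: raag_eq_cat; first exact: raag_refl.
under eq_filter => m do rewrite /= /in_p pair_indexE andbC.
exact: raag_refl.
Qed.

Theorem raag_join_pairs_iso l :
  all join_pair l -> disjoint_pairs l ->
  grp_iso (RAAG e)
    (prod_grp (pow_grp F2 (size l)) (RAAG (restrict e (outside_pairs l)))).
Proof.
move=> lj ld; pose rest v : option {v | outside_pairs l v} := insub v.
have restK v x : rest v = Some x -> val x = v.
  by rewrite /rest; case: insubP => // u _ <- [<-].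
exists (fun x => (pairs_proj l x, wpmap rest x)).
exists (fun y => pairs_word l y.1 ++ wmap val y.2).
split.
- move=> x y xy; split; first exact: pairs_proj_raag_eq.
  by apply: wpmap_raag_eq xy => a b a' b' /restK <- /restK <-.
- move=> [x1 x2] [y1 y2] [/= xy1 xy2].
  apply: raag_eq_cat; first exact: pairs_word_geq.
  by apply: wmap_raag_eq xy2.
- move=> x y; split; rewrite /= ?pairs_proj_cat ?wpmap_cat.
    exact: pow_F2_geq_refl.
  exact: raag_refl.
- move=> x /=; rewrite wmap_wpmap //; apply: raag_sym.
  rewrite /wfilter (eq_filter (a2 := fun m : letter V => outside_pairs l m.1)).
    exact: raag_eq_pairs_decomp.
  by move=> m; rewrite /= isSome_insub.
- move=> [y1 y2]; split => /=.
    rewrite (pairs_proj_word y1 (s := [::])) //; first exact: pow_F2_geq_refl.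
    by rewrite all_map; apply/allP=> m _; exact: valP.
  rewrite wpmap_cat (wpmap_wmap _ valK) wpmap_eq_nil; first exact: raag_refl.
  by apply: sub_all (pairs_word_inside y1) => m; rewrite isSome_insub.
Qed.
End JoinPairs.

Lemma connect_nopredE (T : finType) (r : rel T) c t :
  (forall x, ~~ r x t) -> connect r c t = (c == t).
Proof.
move=> nopred; apply/idP/eqP=> [|->]; last exact: connect0.
case/connectP=> p; case/lastP: p => [|q y] /=; first by move=> _ ->.
rewrite rcons_path last_rcons => /andP[_ rqy] yt.
by move: (nopred (last c q)); rewrite yt rqy.
Qed.

Lemma vequiv_refl (V : finType) (e : rel V) u : vequiv e u u.
Proof. by rewrite /vequiv /vle /st subsetUr. Qed.

Lemma nafree_class_witness (V : finType) (e : rel V) C :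
  nafree_class e C -> exists u v, [/\ C = eqclass e u, v \in C, u != v & ~~ e u v].
Proof.
case/and3P=> /existsP[u /eqP defC] /card_gt1P[x [y [xC yC xy]]] /forallP nadj.
have uC : u \in C by rewrite defC inE vequiv_refl.
have [v vC vu] : exists2 v, v \in C & v != u.
  by case: (eqVneq x u) => [xu|]; [exists y; rewrite // -xu eq_sym | exists x].
exists u, v; split; rewrite 1?eq_sym //.
by move/implyP: (nadj u) => /(_ uC) /forallP /(_ v) /implyP /(_ vC).
Qed.

Section Classes.
Variables (V : finType) (e : rel V).
Hypotheses (e_sym : symmetric e) (e_irr : irreflexive e).

Lemma nonadj_vequiv_adjE a b x : vequiv e a b -> ~~ e a b -> e a x = e b x.
Proof.
have vle_adj u v : vle e u v -> ~~ e u v -> e u x -> e v x.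
  move=> /subsetP/(_ x) uv nuv ux; move: uv; rewrite !inE ux => /(_ isT) /orP[/eqP xv|//].
  by rewrite -xv ux in nuv.
case/andP=> ab ba nab; apply/idP/idP; first exact: vle_adj.
by apply: vle_adj; rewrite // e_sym.
Qed.

Lemma join_pair_vle p u v :
  join_pair e p -> u \in pair_set p -> v \in pair_set p -> vle e u v.
Proof.
move=> pj up vp; apply/subsetP=> x; rewrite !inE => ux; apply/orP; right.
apply: (join_pair_adj pj vp); apply: contraTN ux => xp.
by rewrite (join_pair_nonadj e_sym e_irr pj up xp).
Qed.

Lemma eqclass_join_pair p : join_pair e p -> eqclass e p.1 = pair_set p.
Proof.
move=> pj; have p1 : p.1 \in pair_set p by rewrite !inE eqxx.
apply/setP=> x; rewrite inE; apply/idP/idP => [/andP[_ /subsetP x1]|xp]; last first.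
  by rewrite /vequiv !(join_pair_vle pj).
apply: contraT => xp; have p2 : p.2 \in pair_set p by rewrite !inE eqxx orbT.
have := x1 p.2; rewrite !inE e_sym (join_pair_adj pj p2 xp) => /(_ isT) /orP[/eqP p21|].
  by case/and3P: pj; rewrite p21 eqxx.
by case/and3P: pj => _ /negbTE->.
Qed.

Lemma nafree_class_join_pair p : join_pair e p -> nafree_class e (pair_set p).
Proof.
move=> pj; apply/and3P; split.
- by apply/existsP; exists p.1; rewrite eqclass_join_pair.
- by case/and3P: pj => p12 _ _; rewrite cards2 p12.
- apply/forallP=> u; apply/implyP=> up; apply/forallP=> v; apply/implyP=> vp.
  by rewrite (join_pair_nonadj e_sym e_irr pj up vp).
Qed.

Lemma join_pair_of_vequiv a b :
  ~ has_SIL e -> a != b -> ~~ e a b -> vequiv e a b -> join_pair e (a, b).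
Proof.
move=> noSIL ab nab ab_eq; have adjE x := nonadj_vequiv_adjE x ab_eq nab.
rewrite /join_pair /= ab nab /=; apply/forallP=> c; apply/implyP.
rewrite !inE negb_or -adjE andbb => /andP[ca cb]; apply: contraT => nac.
have nbc : ~~ e b c by rewrite -adjE.
(* No edge of the complement of lk a :&: lk b enters a or b. *)
have in_L x t : (t == a) || (t == b) -> e x t -> x \in lk e a :&: lk e b.
  by rewrite e_sym !inE adjE andbb; case/orP=> /eqP-> //; rewrite adjE.
case: noSIL; exists a, b, c; rewrite /sil ab nab nac nbc /=.
by rewrite !connect_nopredE ?(negbTE ca) ?(negbTE cb) // => x;
  apply/and3P=> -[/in_L-> //]; rewrite eqxx ?orbT.
Qed.

Lemma nafree_class_pair C :
  ~ has_SIL e -> nafree_class e C -> exists2 p, join_pair e p & C = pair_set p.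
Proof.
move=> noSIL /nafree_class_witness[u [v [defC vC uv nuv]]].
have uv_eq : vequiv e u v by move: vC; rewrite defC inE.
have uvj := join_pair_of_vequiv noSIL uv nuv uv_eq.
by exists (u, v); rewrite // defC (eqclass_join_pair uvj).
Qed.

Lemma join_pair_overlap p q v :
  join_pair e p -> join_pair e q -> v \in pair_set p -> v \in pair_set q ->
  pair_set q = pair_set p.
Proof.
move=> pj qj vp vq; apply/eqP; rewrite eqEcard; apply/andP; split.
  apply/subsetP=> x xq; apply: contraFT (join_pair_nonadj e_sym e_irr qj vq xq).
  exact: join_pair_adj pj vp.
by case/and3P: pj => p12 _ _; case/and3P: qj => q12 _ _; rewrite !cards2 p12 q12.
Qed.

Lemma uniq_disjoint_pairs l :
  all (join_pair e) l -> uniq (map pair_set l) -> disjoint_pairs l.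
Proof.
elim: l => //= p l IH /andP[pj lj] /andP[pl lu]; rewrite /disjoint_pairs /=.
apply/andP; split; last exact: IH.
apply/allP=> q ql; apply/pred0P=> v /=; apply/negbTE/andP=> -[vp vq].
by move: pl; rewrite -(join_pair_overlap pj (allP lj q ql) vp vq) map_f.
Qed.

Lemma vle_restrict l (x y : {v | outside_pairs l v}) :
  all (join_pair e) l -> vle (restrict e (outside_pairs l)) x y -> vle e (val x) (val y).
Proof.
move=> lj /subsetP xy; apply/subsetP=> w; rewrite !inE => xw.
have [wo|/allPn[p pl /negbNE wp]] := boolP (outside_pairs l w).
  by move: (xy (exist _ w wo)); rewrite !inE -val_eqE /= => /(_ xw).
by rewrite e_sym (join_pair_adj (allP lj p pl) wp (allP (valP y) p pl)) orbT.
Qed.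

Lemma no_nafree_class_outside l C :
  ~ has_SIL e -> all (join_pair e) l ->
  (forall C', nafree_class e C' -> C' \in map pair_set l) ->
  ~~ nafree_class (restrict e (outside_pairs l)) C.
Proof.
move=> noSIL lj lC; apply/negP=> /nafree_class_witness[u [v [defC vC uv nuv]]].
have /andP[uv_le vu_le] : vequiv (restrict e (outside_pairs l)) u v.
  by move: vC; rewrite defC inE.
have uv_eq : vequiv e (val u) (val v) by rewrite /vequiv !vle_restrict.
have uvj := join_pair_of_vequiv noSIL uv nuv uv_eq.
case/mapP: (lC _ (nafree_class_join_pair uvj)) => p pl puv.
have : val u \in pair_set p by rewrite -puv !inE eqxx.
by rewrite (negbTE (allP (valP u) p pl)).
Qed.
End Classes.

Lemma seq_preimage (T : Type) (U : eqType) (f : T -> U) (P : pred T) (s : seq U) :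
  (forall u, u \in s -> exists2 t, P t & u = f t) -> exists2 l, all P l & map f l = s.
Proof.
elim: s => [|u s IH] fs; first by exists [::].
have [t Pt ->] := fs u (mem_head _ _).
have [|l Pl <-] := IH; first by move=> u' u's; apply: fs; rewrite inE u's orbT.
by exists (t :: l); rewrite /= ?Pt.
Qed.

Lemma restrict_simplicial (V : finType) (e : rel V) (P : pred V) :
  simplicial e -> simplicial (restrict e P).
Proof. by case=> e_sym e_irr; split=> [x y|x]; [exact: e_sym | exact: e_irr]. Qed.

Theorem lemma4p2 (V : finType) (e : rel V) :
  simplicial e -> ~ has_SIL e ->
  exists (W : finType) (f : rel W),
    [/\ simplicial f,
        (forall C : {set W}, ~~ nafree_class f C) &
        grp_iso (RAAG e) (prod_grp (pow_grp F2 (num_nafree e)) (RAAG f))].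
Proof.
move=> e_simpl noSIL; have [e_sym e_irr] := e_simpl.
pose classes := enum [set C | nafree_class e C].
have [l lj defl] : exists2 l, all (join_pair e) l & map pair_set l = classes.
  apply: seq_preimage => C; rewrite mem_enum inE.
  by case/(nafree_class_pair e_sym e_irr noSIL) => p; exists p.
have ld : disjoint_pairs l by apply: uniq_disjoint_pairs; rewrite // defl enum_uniq.
have size_l : num_nafree e = size l by rewrite /num_nafree cardE -/classes -defl size_map.
exists {v | outside_pairs l v}, (restrict e (outside_pairs l)); split.
- exact: restrict_simplicial.
- move=> C; apply: no_nafree_class_outside => // C' C'_free.
  by rewrite defl mem_enum inE.
- by rewrite size_l; exact: raag_join_pairs_iso.
Qed.
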